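(* Let $n\geq 10$ and $t\geq 3\log_2 n$ be positive integers. Then there exists an orientation $D$ of the complete bipartite graph $K_{n,n}$, with parts $X$ and $Y$, such that for every $I\subseteq X$ and $J\subseteq Y$ with $|I|=|J|=t$, the induced subdigraph $D[I\cup J]$ contains a directed cycle.
   Context: An orientation of a graph is the digraph obtained by giving each edge one of its two directions. *)

From Stdlib Require Import Reals.
From mathcomp Require Import all_boot.
Set Implicit Arguments. Unset Strict Implicit. Unset Printing Implicit Defensive.

Definition bvertex (n : nat) : finType := ('I_n + 'I_n)%type.

(* An orientation of K_{n,n}: for each edge {x,y} (x in X, y in Y), the boolean
   o x y says whether the edge is directed x -> y (true) or y -> x (false). *)
Definition orientation (n : nat) := {ffun 'I_n -> {ffun 'I_n -> bool}}.

Definition arc (n : nat) (o : orientation n) : rel (bvertex n) :=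
  fun u v => match u, v with
             | inl x, inr y => o x y
             | inr y, inl x => ~~ o x y
             | _, _ => false
             end.

Definition has_dicycle (n : nat) (o : orientation n) (S : {set bvertex n}) : Prop :=
  exists c : seq (bvertex n),
    [/\ c != [::], uniq c, all (fun v => v \in S) c & cycle (arc o) c].

Local Open Scope R_scope.
Definition log2R (x : R) : R := ln x / ln 2.
Definition t_bound (n t : nat) : Prop := 3 * log2R (INR n) <= INR t.

From Stdlib Require Import Reals Lra.
From mathcomp Require Import all_boot zify.
Set Implicit Arguments. Unset Strict Implicit. Unset Printing Implicit Defensive.

(* It suffices to find a directed 4-cycle in every D[I u J].  If there is
   none, the rows (the out-neighbourhoods of the vertices of I) form a chain,
   and x -> y holds iff the number of x' with y -> x' is at most the number
   of rows strictly below that of x.  Such an orientation is thus determined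
   by two maps I, J -> {0..t}, and there are at most (t+1)^(2t) of them.  A
   union bound over the C(n,t)^2 choices of I and J leaves an orientation of
   K_{n,n} that is good for all of them as soon as
   C(n,t)^2 (t+1)^(2t) 2^(n^2-t^2) < 2^(n^2), which holds when n^3 <= 2^t. *)

Lemma pffun_on_ffun_if (aT rT : finType) (D : {set aT}) (h : aT -> rT) y0 :
  [ffun z => if z \in D then h z else y0] \in pffun_on y0 D [set: rT].
Proof.
apply/pffun_onP; split=> [|z _]; last by rewrite inE.
by apply/subsetP => z; rewrite !inE ffunE; case: (z \in D); rewrite ?eqxx.
Qed.

Lemma leq_card_setId (T : finType) (A : {set T}) (P : pred T) :
  #|[set x in A | P x]| <= #|A|.
Proof. by rewrite setIdE subset_leq_card ?subsetIl. Qed.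

Lemma leq_card_bigcup (T I : finType) (P : {pred I}) (B : I -> {set T}) :
  #|\bigcup_(i in P) B i| <= \sum_(i in P) #|B i|.
Proof.
elim/big_rec2: _ => [|i U s _ IH]; first by rewrite cards0.
by rewrite (leq_trans (leq_card_setU _ _).1) ?leq_add2l.
Qed.

Lemma exists_notin_bigcup (T I : finType) (P : {pred I}) (B : I -> {set T}) :
  \sum_(i in P) #|B i| < #|T| -> exists x, forall i, i \in P -> x \notin B i.
Proof.
move=> sum_lt; have : ~~ ([set: T] \subset \bigcup_(i in P) B i).
  apply: contraL sum_lt => /subset_leq_card; rewrite cardsT -leqNgt => le_cup.
  exact: leq_trans le_cup (leq_card_bigcup _ _).
case/subsetPn => x _ x_out; exists x => i Pi.
by apply: contra x_out => xB; apply/bigcupP; exists i.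
Qed.

Section RealBound.
Local Open Scope R_scope.

Lemma INR_expn (m k : nat) : INR (m ^ k)%N = INR m ^ k.
Proof. by elim: k => [|k IHk] //=; rewrite expnS mult_INR IHk. Qed.

Lemma t_bound_cube (n t : nat) : (0 < n)%N -> t_bound n t -> (n ^ 3 <= 2 ^ t)%N.
Proof.
move=> n_gt0; rewrite /t_bound /log2R => tb.
have ln2_gt0 : 0 < ln 2 by rewrite -ln_1; apply: ln_increasing; lra.
have n_pos : 0 < INR n by apply: lt_0_INR; apply/ltP.
have cube_le : 3 * ln (INR n) <= INR t * ln 2.
  have := Rmult_le_compat_r _ _ _ (Rlt_le _ _ ln2_gt0) tb.
  by rewrite Rmult_assoc /Rdiv Rmult_assoc Rinv_l; lra.
rewrite leqNgt; apply/negP => /ltP/lt_INR; rewrite !INR_expn [INR 2]/= => lt_exp.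
have := ln_increasing _ _ (pow_lt 2 t ltac:(lra)) lt_exp.
by rewrite !ln_pow //=; lra.
Qed.

End RealBound.

Lemma expS6_leq_double (u : nat) : 11 <= u -> u.+1 ^ 6 <= 2 * u ^ 6.
Proof.
move=> u_ge11.
have : (11 * u.+1) ^ 6 <= (12 * u) ^ 6 by rewrite leq_exp2r //; lia.
by rewrite !expnMn; move: (u ^ 6) (u.+1 ^ 6) => a b; lia.
Qed.

(* From t to t+1 the left side grows by at most 2^(t+1) (t+1)^6, because
   ((t+2)/(t+1))^6 <= 2, and the right side by 2^(2t+1) (t+1)^6. *)
Lemma expS_lt_fact_exp2 (t : nat) : 10 <= t -> t.+1 ^ (6 * t) < t`! ^ 6 * 2 ^ (t * t).
Proof.
elim: t => // t IHt t_ge10.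
have [->|t_neq9] := eqVneq t 9.
  by clear IHt; rewrite !factS fact0; lia.
have {}IHt := IHt ltac:(lia).
have lhs_step : t.+2 ^ (6 * t.+1) <= 2 ^ t.+1 * t.+1 ^ 6 * t.+1 ^ (6 * t).
  rewrite -mulnA -expnD -mulnS !expnM -expnMn leq_exp2r //.
  by apply: expS6_leq_double; lia.
have rhs_step : t.+1`! ^ 6 * 2 ^ (t.+1 * t.+1)
              = 2 ^ t.+1 * t.+1 ^ 6 * (2 ^ t * (t`! ^ 6 * 2 ^ (t * t))).
  rewrite factS expnMn (_ : t.+1 * t.+1 = t.+1 + t + t * t); last by lia.
  rewrite !expnD.
  by move: (2 ^ t.+1) (2 ^ t) (t.+1 ^ 6) (t`! ^ 6) (2 ^ (t * t)) => a b c d e; lia.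
rewrite rhs_step (leq_ltn_trans lhs_step) // ltn_pmul2l ?muln_gt0 ?expn_gt0 //.
by rewrite (leq_trans IHt) // leq_pmull // expn_gt0.
Qed.

Lemma ffact_leq_expn (n k : nat) : n ^_ k <= n ^ k.
Proof. by elim: k => // k IHk; rewrite ffactnSr expnSr leq_mul // leq_subr. Qed.

Lemma ge10_of_cube_leq_exp2 (n t : nat) : 10 <= n -> n ^ 3 <= 2 ^ t -> 10 <= t.
Proof.
move=> n_ge10 cube_le; rewrite leqNgt; apply/negP => t_lt10.
have : 2 ^ t <= 2 ^ 9 by rewrite leq_exp2l //; lia.
have : 10 ^ 3 <= n ^ 3 by rewrite leq_exp2r.
by move: cube_le; move: (2 ^ t) (n ^ 3) => a b; lia.
Qed.

(* After cubing, n^3 <= 2^t reduces this to expS_lt_fact_exp2. *)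
Lemma expn_expS_lt_fact_exp2 (n t : nat) : 10 <= t -> n ^ 3 <= 2 ^ t ->
  (n ^ t * t.+1 ^ t) ^ 2 < t`! ^ 2 * 2 ^ (t * t).
Proof.
move=> t_ge10 cube_le; rewrite -(@ltn_exp2r _ _ 3) //.
have -> : ((n ^ t * t.+1 ^ t) ^ 2) ^ 3 = (n ^ 3) ^ (2 * t) * t.+1 ^ (6 * t).
  by rewrite -!expnM expnMn -!expnM; congr (_ ^ _ * _ ^ _); lia.
have -> : (t`! ^ 2 * 2 ^ (t * t)) ^ 3 = 2 ^ (2 * (t * t)) * (t`! ^ 6 * 2 ^ (t * t)).
  rewrite expnMn -!expnM (_ : t * t * 3 = 2 * (t * t) + t * t); last by lia.
  by rewrite expnD; move: (2 ^ (2 * (t * t))) (2 ^ (t * t)) (t`! ^ (2 * 3)) => a b c; lia.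
apply: (@leq_ltn_trans ((2 ^ t) ^ (2 * t) * t.+1 ^ (6 * t))).
  by rewrite leq_mul2r leq_exp2r ?cube_le ?orbT //; lia.
rewrite -expnM (_ : t * (2 * t) = 2 * (t * t)); last by lia.
by rewrite ltn_mul2l expn_gt0 /= expS_lt_fact_exp2.
Qed.

Lemma union_bound_lt (n t : nat) : 10 <= n -> n ^ 3 <= 2 ^ t ->
  'C(n, t) ^ 2 * (t.+1 ^ t) ^ 2 * 2 ^ (n * n - t * t) < 2 ^ (n * n).
Proof.
move=> n_ge10 cube_le; have t_ge10 := ge10_of_cube_leq_exp2 n_ge10 cube_le.
have [t_le_n|n_lt_t] := leqP t n; last by rewrite bin_small // exp0n // !mul0n expn_gt0.
have tt_le_nn : t * t <= n * n by rewrite leq_mul.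
rewrite -{2}(subnK tt_le_nn) expnD mulnC ltn_pmul2l ?expn_gt0 //.
rewrite -(@ltn_pmul2l (t`! ^ 2)) ?expn_gt0 ?fact_gt0 //.
rewrite mulnA -expnMn [t`! * _]mulnC bin_ffact -expnMn.
apply: leq_ltn_trans (expn_expS_lt_fact_exp2 t_ge10 cube_le).
by rewrite leq_exp2r // leq_mul2r ffact_leq_expn orbT.
Qed.

Section AlternatingSquare.
Variables (R C : finType) (m : R -> C -> bool) (I : {set R}) (J : {set C}).

(* For an orientation (m x y meaning x -> y) this is the directed 4-cycle
   x -> y -> x' -> y' -> x. *)
Definition alt_square x x' y y' := [&& m x y, ~~ m x' y, m x' y' & ~~ m x y'].

Definition has_alt_square :=
  [exists x in I, exists x' in I, exists y in J, exists y' in J, alt_square x x' y y'].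

Definition row x := [set y in J | m x y].

Definition row_level x := #|[set x' in I | row x' \proper row x]|.

Definition col_zeros y := #|[set x' in I | ~~ m x' y]|.

Hypothesis no_alt : ~~ has_alt_square.

Lemma rows_nested x x' : x \in I -> x' \in I ->
  (row x \subset row x') || (row x' \subset row x).
Proof.
move=> xI x'I; case: (boolP (row x \subset row x')) => //= /subsetPn [y].
rewrite !inE => /andP [yJ mxy] /nandP nx'y.
apply/subsetP => y' /[!inE] /andP [y'J mx'y']; rewrite y'J /=.
apply: contraR no_alt => nxy'; apply/existsP; exists x; rewrite xI /=.
apply/existsP; exists x'; rewrite x'I /=; apply/existsP; exists y; rewrite yJ /=.
apply/existsP; exists y'; rewrite y'J /alt_square mxy mx'y' nxy' andbT /=.
by case: nx'y => [/negP|->].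
Qed.

(* If y is in row x, every row missing y is strictly below row x; otherwise
   every row strictly below row x misses y, and so does row x itself. *)
Lemma threshold_of_no_alt_square x y : x \in I -> y \in J ->
  m x y = (col_zeros y <= row_level x).
Proof.
move=> xI yJ; apply/idP/idP => [mxy | ].
  apply: subset_leq_card; apply/subsetP => x' /[!inE] /andP [x'I nx'y].
  rewrite x'I /= properE; apply/andP; split.
    case/orP: (rows_nested xI x'I) => // /subsetP/(_ y).
    by rewrite !inE yJ mxy (negbTE nx'y) => /(_ isT).
  by apply/subsetPn; exists y; rewrite !inE ?yJ ?mxy // (negbTE nx'y).
apply: contraLR => nxy; rewrite -ltnNge; apply: proper_card.
apply/properP; split.
  apply/subsetP => x' /[!inE] /andP [x'I lt_row]; rewrite x'I /=.
  apply: contra nxy => mx'y.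
  by have := subsetP (proper_sub lt_row) y; rewrite !inE yJ mx'y => /(_ isT).
by exists x; rewrite !inE ?xI ?nxy ?properxx.
Qed.

End AlternatingSquare.

Section ThresholdFill.
Variables (R C : finType) (I : {set R}) (J : {set C}).
Notation k := #|I|.+1.

Definition threshold_fill (a : {ffun R -> 'I_k}) (b : {ffun C -> 'I_k})
    (g : {ffun R * C -> bool}) : {ffun R * C -> bool} :=
  [ffun p => if p \in setX I J then b p.2 <= a p.1 else g p].

Definition fill_params :=
  setX (setX [set a : {ffun R -> 'I_k} | a \in pffun_on ord0 I [set: 'I_k]]
             [set b : {ffun C -> 'I_k} | b \in pffun_on ord0 J [set: 'I_k]])
       [set g : {ffun R * C -> bool} | g \in pffun_on false (~: setX I J) [set: bool]].

Lemma card_fill_params :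
  #|fill_params| = k ^ #|I| * k ^ #|J| * 2 ^ (#|R| * #|C| - #|I| * #|J|).
Proof.
rewrite !cardsX !cardsE !card_pffun_on !cardsT card_ord card_bool.
by rewrite -card_prod -(cardsC (setX I J)) cardsX addKn.
Qed.


Lemma no_alt_square_threshold_fill (f : {ffun R * C -> bool}) :
    ~~ has_alt_square (fun x y => f (x, y)) I J ->
  f \in [set threshold_fill q.1.1 q.1.2 q.2 | q in fill_params].
Proof.
move=> no_alt; set m := fun x y => f (x, y).
pose a := [ffun x => if x \in I then inord (row_level m I J x) else ord0 : 'I_k].
pose b := [ffun y => if y \in J then inord (col_zeros m I y) else ord0 : 'I_k].
pose g := [ffun p => if p \in ~: setX I J then f p else false].
apply/imsetP; exists (a, b, g).
  by rewrite !in_setX !in_set !pffun_on_ffun_if.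
apply/ffunP => -[x y]; rewrite !ffunE in_setC /=.
case: ifP => [/setXP [xI yJ] | -> //].
rewrite xI yJ !inordK ?ltnS ?leq_card_setId //.
exact: (threshold_of_no_alt_square no_alt xI yJ).
Qed.

Lemma card_no_alt_square_leq :
  #|[set f : {ffun R * C -> bool} | ~~ has_alt_square (fun x y => f (x, y)) I J]|
    <= k ^ #|I| * k ^ #|J| * 2 ^ (#|R| * #|C| - #|I| * #|J|).
Proof.
rewrite -card_fill_params.
apply: leq_trans (leq_imset_card (fun q => threshold_fill q.1.1 q.1.2 q.2) _).
by apply/subset_leq_card/subsetP => f /[!inE]; apply: no_alt_square_threshold_fill.
Qed.

End ThresholdFill.


Lemma exists_alt_squares_everywhere (n t : nat) : 10 <= n -> n ^ 3 <= 2 ^ t ->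
  exists f : {ffun 'I_n * 'I_n -> bool}, forall I J : {set 'I_n},
    #|I| = t -> #|J| = t -> has_alt_square (fun x y => f (x, y)) I J.
Proof.
move=> n_ge10 cube_le; pose sets_t := [set I : {set 'I_n} | #|I| == t].
pose bad (p : {set 'I_n} * {set 'I_n}) :=
  [set f : {ffun 'I_n * 'I_n -> bool} | ~~ has_alt_square (fun x y => f (x, y)) p.1 p.2].
have [f good_f] : exists f, forall p, p \in setX sets_t sets_t -> f \notin bad p.
  apply: exists_notin_bigcup; rewrite card_ffun card_bool card_prod card_ord.
  apply: leq_ltn_trans (union_bound_lt n_ge10 cube_le).
  have card_pairs : #|setX sets_t sets_t| = 'C(n, t) ^ 2.
    by rewrite cardsX card_draws card_ord mulnn.
  rewrite -mulnA -card_pairs -sum_nat_const.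
  apply: leq_sum => -[I J] /setXP [/[!inE] /eqP cI /eqP cJ].
  by have := card_no_alt_square_leq I J; rewrite cI cJ !card_ord mulnn.
exists f => I J cI cJ.
by have := good_f (I, J); rewrite in_setX !inE cI cJ eqxx negbK => /(_ isT).
Qed.

Lemma has_alt_square_dicycle n (o : orientation n) (m : 'I_n -> 'I_n -> bool) I J :
  m =2 (fun x y => o x y) -> has_alt_square m I J ->
  has_dicycle o ((inl @: I) :|: (inr @: J)).
Proof.
move=> m_o /existsP [x /andP [xI /existsP [x' /andP [x'I /existsP [y /andP [yJ
  /existsP [y' /andP [y'J]]]]]]]].
rewrite /alt_square !m_o => /and4P [xy yx' x'y' y'x].
have x_neq_x' : x != x' by apply: contraTneq yx' => <-; rewrite xy.
have y_neq_y' : y != y' by apply: contraTneq x'y' => <-; rewrite yx'.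
exists [:: inl x; inr y; inl x'; inr y']; split=> //=.
- by rewrite !inE /= !eqE /= orbF x_neq_x' y_neq_y'.
- by rewrite !inE !imset_f ?orbT.
- by rewrite xy yx' x'y' y'x.
Qed.

Theorem mainTheorem5 (n t : nat) :
  (10 <= n)%N -> (0 < t)%N -> t_bound n t ->
  exists o : orientation n,
    forall (I J : {set 'I_n}), #|I| = t -> #|J| = t ->
      has_dicycle o ((inl @: I) :|: (inr @: J)).
Proof.
move=> n_ge10 _ tb.
have cube_le := t_bound_cube (leq_ltn_trans (leq0n 9) n_ge10) tb.
have [f alt_f] := exists_alt_squares_everywhere n_ge10 cube_le.
exists [ffun x => [ffun y => f (x, y)]] => I J cI cJ.
by apply: has_alt_square_dicycle (alt_f I J cI cJ) => x y; rewrite !ffunE.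
Qed.
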